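(* Let $q \geq 1$ and let $k$ be a positive integer with $k < n$. Let $\boldsymbol{B} = [\boldsymbol{B}[1] \ \cdots \ \boldsymbol{B}[n]] \in \mathbb{R}^{D \times N}$ be a dictionary with unit-norm columns, blocks $\boldsymbol{B}[i] \in \mathbb{R}^{D \times m_i}$, and pairwise disjoint block subspaces $\mathcal{S}_i = \operatorname{span}(\boldsymbol{B}[i])$. Assume that every signal $\boldsymbol{y} \in \mathbb{R}^D$ that admits a $k$-block-sparse representation admits a unique one. For an index set $\Lambda \subseteq \{1,\dots,n\}$ and $\boldsymbol{x} \in \bigoplus_{i \in \Lambda} \mathcal{S}_i$ let $$W_\Lambda(\boldsymbol{x}) = \min\Big\{ \sum_{i \in \Lambda} \|\boldsymbol{B}[i]\boldsymbol{c}[i]\|_q \;:\; \boldsymbol{x} = \sum_{i \in \Lambda} \boldsymbol{B}[i]\boldsymbol{c}[i] \Big\}.$$ Then the following are equivalent: (i) for every $\Lambda_k \subseteq \{1,\dots,n\}$ with $|\Lambda_k| = k$ and every $\boldsymbol{y} \in \bigoplus_{i \in \Lambda_k} \mathcal{S}_i$, every optimal solution $\boldsymbol{c}^*$ of $P'_{\ell_q/\ell_1}(\boldsymbol{y})$ satisfies $\boldsymbol{B}[i]\boldsymbol{c}^*[i] = \boldsymbol{0}$ for all $i \notin \Lambda_k$ (i.e. the solution of $P'_{\ell_q/\ell_1}$ coincides with that of $P'_{\ell_q/\ell_0}$); (ii) for every $\Lambda_k$ with $|\Lambda_k| = k$, writing $\widehat{\Lambda}_k = \{1,\dots,n\}\setminus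 \Lambda_k$, and every nonzero $\boldsymbol{x} \in \big(\bigoplus_{i \in \Lambda_k} \mathcal{S}_i\big) \cap \big(\bigoplus_{i \in \widehat{\Lambda}_k} \mathcal{S}_i\big)$, one has $W_{\Lambda_k}(\boldsymbol{x}) < W_{\widehat{\Lambda}_k}(\boldsymbol{x})$.
   Context: The dictionary $\boldsymbol{B} \in \mathbb{R}^{D\times N}$ has columns of unit Euclidean norm and is partitioned into $n$ blocks $\boldsymbol{B}[i] \in \mathbb{R}^{D \times m_i}$; blocks may have linearly dependent columns. $\mathcal{S}_i$ is the column span of $\boldsymbol{B}[i]$, and $\mathcal{S}_i \cap \mathcal{S}_j = \{0\}$ for $i \neq j$. A vector $\boldsymbol{c} \in \mathbb{R}^N$ is written $\boldsymbol{c} = (\boldsymbol{c}[1]; \dots; \boldsymbol{c}[n])$ with $\boldsymbol{c}[i] \in \mathbb{R}^{m_i}$. A $k$-block-sparse representation of $\boldsymbol{y}$ is an expression $\boldsymbol{y} = \sum_{i \in \Lambda} \boldsymbol{s}_i$ with $|\Lambda| \le k$ and $\boldsymbol{s}_i \in \mathcal{S}_i \setminus \{0\}$; it is unique if any two such expressions have the same $\Lambda$ and the same $\boldsymbol{s}_i$. $P'_{\ell_q/\ell_1}(\boldsymbol{y})$ is the convex program $\min_{\boldsymbol{c}} \sum_{i=1}^n \|\boldsymbol{B}[i]\boldsymbol{c}[i]\|_q$ subject to $\boldsymbol{y} = \boldsymbol{B}\boldsymbol{c}$; $P'_{\ell_q/\ell_0}(\boldsymbol{y})$ is $\min_{\boldsymbol{c}}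 \#\{i : \|\boldsymbol{B}[i]\boldsymbol{c}[i]\|_q \neq 0\}$ subject to $\boldsymbol{y} = \boldsymbol{B}\boldsymbol{c}$. *)

From HB Require Import structures.
From mathcomp Require Import all_boot all_order all_algebra.
From mathcomp Require Import classical_sets reals exp.
Set Implicit Arguments. Unset Strict Implicit. Unset Printing Implicit Defensive.
Import Order.TTheory GRing.Theory Num.Theory.
Local Open Scope ring_scope.
Local Open Scope classical_set_scope.

Definition block_dict (R : realType) (D n : nat) (m : 'I_n -> nat) :=
  forall i : 'I_n, 'M[R]_(D, m i).

Definition block_coef (R : realType) (n : nat) (m : 'I_n -> nat) :=
  forall i : 'I_n, 'cV[R]_(m i).

Definition lqnorm (R : realType) (q : R) (D : nat) (v : 'cV[R]_D) : R :=
  (\sum_(j < D) (`|v j 0| `^ q)) `^ q^-1.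

Definition unit_norm_columns (R : realType) D n m (B : @block_dict R D n m) :=
  forall (i : 'I_n) (j : 'I_(m i)), Num.sqrt (\sum_(r < D) (B i r j) ^+ 2) = 1.

Definition inS (R : realType) D n m (B : @block_dict R D n m) (i : 'I_n)
  (v : 'cV[R]_D) : Prop := exists c : 'cV[R]_(m i), v = B i *m c.

Definition disjoint_blocks (R : realType) D n m (B : @block_dict R D n m) :=
  forall (i j : 'I_n) (v : 'cV[R]_D), i != j -> inS B i v -> inS B j v -> v = 0.

Definition blocksum (R : realType) D n m (B : @block_dict R D n m)
  (L : {set 'I_n}) (c : block_coef R m) : 'cV[R]_D :=
  \sum_(i in L) B i *m c i.

Definition in_blocksum (R : realType) D n m (B : @block_dict R D n m)
  (L : {set 'I_n}) (x : 'cV[R]_D) : Prop :=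
  exists c : block_coef R m, x = blocksum B L c.

Definition kbs_rep (R : realType) D n m (B : @block_dict R D n m) (k : nat)
  (y : 'cV[R]_D) (L : {set 'I_n}) (s : 'I_n -> 'cV[R]_D) : Prop :=
  [/\ (#|L| <= k)%N,
      (forall i, i \in L -> inS B i (s i) /\ s i != 0)
    & y = \sum_(i in L) s i].

Definition unique_kbs (R : realType) D n m (B : @block_dict R D n m) (k : nat) :=
  forall (y : 'cV[R]_D) L1 s1 L2 s2,
    kbs_rep B k y L1 s1 -> kbs_rep B k y L2 s2 ->
    L1 = L2 /\ (forall i, i \in L1 -> s1 i = s2 i).

Definition obj_lq_l1 (R : realType) (q : R) D n m (B : @block_dict R D n m)
  (c : block_coef R m) : R :=
  \sum_(i < n) lqnorm q (B i *m c i).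

Definition opt_lq_l1 (R : realType) (q : R) D n m (B : @block_dict R D n m)
  (y : 'cV[R]_D) (c : block_coef R m) : Prop :=
  y = blocksum B [set: 'I_n]%SET c /\
  forall c' : block_coef R m, y = blocksum B [set: 'I_n]%SET c' ->
    obj_lq_l1 q B c <= obj_lq_l1 q B c'.

(* W_L(x) = min { sum_{i in L} ||B[i]c[i]||_q : x = sum_{i in L} B[i]c[i] },
   written as an infimum (the minimum is attained for x in the sum of the S_i). *)
Definition W_lq (R : realType) (q : R) D n m (B : @block_dict R D n m)
  (L : {set 'I_n}) (x : 'cV[R]_D) : R :=
  inf [set w : R | exists c : block_coef R m,
         x = blocksum B L c /\ w = \sum_(i in L) lqnorm q (B i *m c i)].

(* Both programs attain their minima: the objective is continuous and coercive
   in the block components [B[i] c[i]], which range over closed subspaces.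
   (ii) -> (i): if an optimal [c] for [y] in the span of the blocks of [L] puts
   a nonzero [x] on the complement of [L], then [x] also lies in the span of the
   blocks of [L]; re-expressing [x] there at cost [W_L(x) < W_{~L}(x)], which is
   at most what [c] pays off [L], gives a cheaper representation of [y] by the
   triangle inequality for the l_q norm.  (i) -> (ii): if [W_{~L}(x) <= W_L(x)],
   a minimizer for [W_{~L}(x)] costs no more than an optimal solution of
   [P'(x)], which by (i) lives on [L] and so costs at least [W_L(x)]; hence it is
   optimal too, and (i) forces it, hence [x], to vanish. *)

From HB Require Import structures.
From mathcomp Require Import all_boot all_order all_algebra.
From mathcomp Require Import classical_sets reals exp ring.
From mathcomp Require Import interval_inference boolp topology normedtype sequences derive.
From mathcomp Require Import convex hoelder.
Set Implicit Arguments. Unset Strict Implicit. Unset Printing Implicit Defensive.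
Import Order.TTheory GRing.Theory Num.Theory.
Import numFieldNormedType.Exports.
Local Open Scope ring_scope.

Section lqnorm.
Variables (R : realType) (q : R).
Hypothesis q_ge1 : 1 <= q.

Let q_gt0 : 0 < q. Proof. exact: lt_le_trans q_ge1. Qed.
Let q_neq0 : q != 0. Proof. by rewrite gt_eqF. Qed.

Let ler_powR2 (a b : R) : 0 <= a -> 0 <= b -> (a `^ q <= b `^ q) = (a <= b).
Proof.
move=> a0 b0; apply/idP/idP => [|ab]; last first.
  by apply: ge0_ler_powR; rewrite ?nnegrE // ltW.
by apply: contraTT; rewrite -!ltNge => ba; apply: gt0_ltr_powR; rewrite ?nnegrE.
Qed.

Lemma lqnorm_ge0 D (v : 'cV[R]_D) : 0 <= lqnorm q v.
Proof. exact: powR_ge0. Qed.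

Lemma lqnorm0 D : lqnorm q (0 : 'cV[R]_D) = 0.
Proof.
by rewrite /lqnorm big1 ?powR0 ?invr_eq0 // => j _; rewrite mxE normr0 powR0.
Qed.

Lemma lqnorm_powR D (v : 'cV[R]_D) : lqnorm q v `^ q = \sum_(j < D) `|v j 0| `^ q.
Proof.
rewrite /lqnorm -powRrM mulVf // powRr1 //.
by apply: sumr_ge0 => j _; exact: powR_ge0.
Qed.

Lemma lqnorm_eq0 D (v : 'cV[R]_D) : lqnorm q v = 0 -> v = 0.
Proof.
move=> /powR_eq0_eq0 v0; apply/matrixP => j k; rewrite (ord1 k) mxE.
apply/normr0_eq0/(@powR_eq0_eq0 _ _ q).
by apply: (psumr_eq0P _ v0) => // i _; exact: powR_ge0.
Qed.

Lemma ler_lqnorm_entry D (v : 'cV[R]_D) j : `|v j 0| <= lqnorm q v.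
Proof.
rewrite -ler_powR2 ?lqnorm_ge0 // lqnorm_powR.
by rewrite (bigD1 j) //= lerDl; apply: sumr_ge0 => i _; exact: powR_ge0.
Qed.

Lemma sum_powR_div_lqnorm D (v : 'cV[R]_D) : 0 < lqnorm q v ->
  \sum_(j < D) (`|v j 0| / lqnorm q v) `^ q = 1.
Proof.
move=> v_gt0; have v_ge0 := ltW v_gt0.
under eq_bigr do rewrite powRM ?invr_ge0 //.
by rewrite -mulr_suml -lqnorm_powR -powRM ?invr_ge0 // mulfV ?gt_eqF // powR1.
Qed.

(* Convexity of [powR^~ q], applied to [a + b = (A + B) (t a/A + (1 - t) b/B)]
   with [t = A / (A + B)]. *)
Lemma powR_addr_le (a b A B : R) : 0 <= a -> 0 <= b -> 0 < A -> 0 < B ->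
  (a + b) `^ q <= (A + B) `^ q *
    (A / (A + B) * (a / A) `^ q + B / (A + B) * (b / B) `^ q).
Proof.
move=> a0 b0 A0 B0; have AB0 : 0 < A + B := addr_gt0 A0 B0.
set t := A / (A + B).
have t0 : 0 <= t := divr_ge0 (ltW A0) (ltW AB0).
have t1 : t <= 1 by rewrite ler_pdivrMr // mul1r lerDl ltW.
have -> : B / (A + B) = 1 - t by rewrite /t; field; rewrite gt_eqF.
have -> : a + b = (A + B) * (t * (a / A) + (1 - t) * (b / B)).
  by rewrite /t; field; rewrite !gt_eqF.
have aA : 0 <= a / A := divr_ge0 a0 (ltW A0).
have bB : 0 <= b / B := divr_ge0 b0 (ltW B0).
have comb0 : 0 <= t * (a / A) + (1 - t) * (b / B).
  by rewrite addr_ge0 // mulr_ge0 // subr_ge0.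
rewrite powRM ?(ltW AB0) //.
rewrite ler_wpM2l ?powR_ge0 //.
have := @convex_powR R q q_ge1 (Itv01 t0 t1) (a / A) (b / B).
rewrite !inE /= !in_itv /= !andbT => /(_ aA bB).
by rewrite !convRE.
Qed.

Lemma sum_powR_addr_le D (a b : 'I_D -> R) (A B : R) :
  (forall j, 0 <= a j) -> (forall j, 0 <= b j) -> 0 < A -> 0 < B ->
  \sum_j (a j / A) `^ q = 1 -> \sum_j (b j / B) `^ q = 1 ->
  \sum_j (a j + b j) `^ q <= (A + B) `^ q.
Proof.
move=> a0 b0 A0 B0 sa sb.
apply: le_trans (ler_sum _ (fun j _ => powR_addr_le (a0 j) (b0 j) A0 B0)) _.
rewrite -mulr_sumr big_split /= -!mulr_sumr sa sb !mulr1 -mulrDl.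
by rewrite divff ?mulr1 // gt_eqF // addr_gt0.
Qed.

Lemma lqnormD D (u v : 'cV[R]_D) : lqnorm q (u + v) <= lqnorm q u + lqnorm q v.
Proof.
have [u0|u_neq0] := eqVneq (lqnorm q u) 0.
  by rewrite (lqnorm_eq0 u0) add0r lqnorm0 add0r.
have [v0|v_neq0] := eqVneq (lqnorm q v) 0.
  by rewrite (lqnorm_eq0 v0) addr0 lqnorm0 addr0.
have u_gt0 : 0 < lqnorm q u by rewrite lt0r u_neq0 lqnorm_ge0.
have v_gt0 : 0 < lqnorm q v by rewrite lt0r v_neq0 lqnorm_ge0.
rewrite -ler_powR2 ?addr_ge0 ?lqnorm_ge0 // lqnorm_powR.
apply: le_trans (sum_powR_addr_le (fun j => normr_ge0 (u j 0))
  (fun j => normr_ge0 (v j 0)) u_gt0 v_gt0 (sum_powR_div_lqnorm u_gt0)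
  (sum_powR_div_lqnorm v_gt0)).
apply: ler_sum => j _; rewrite mxE ler_powR2 ?addr_ge0 //; exact: ler_normD.
Qed.

End lqnorm.

Section real_analysis.
Variable R : realType.
Local Open Scope classical_set_scope.

Lemma continuous_powR_norm (p : R) : 0 < p -> continuous (fun x : R => `|x| `^ p).
Proof.
move=> p_gt0 x; have [->|x_neq0] := eqVneq x 0.
  apply/cvgrPdist_lt => e e_gt0; rewrite normr0 powR0 ?gt_eqF //.
  have e_root : 0 < e `^ p^-1 by rewrite powR_gt0.
  have e_rootK : (e `^ p^-1) `^ p = e by rewrite -powRrM mulVf ?gt_eqF // powRr1 // ltW.
  near=> y; rewrite sub0r normrN ger0_norm ?powR_ge0 // -[ltRHS]e_rootK.
  apply: (gt0_ltr_powR p_gt0); [exact: normr_ge0 | exact: powR_ge0 | near: y].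
  apply/nbhs_normP; exists (e `^ p^-1) => //= y.
  by rewrite /ball_ /= sub0r normrN.
have expR_ln : {near `|x|, (fun b => expR (p * ln b)) =1 (fun b : R => b `^ p)}.
  by near=> b; rewrite /powR gt_eqF //; near: b; apply: lt_nbhsr; rewrite normr_gt0.
apply: (@continuous_comp R R R Num.norm (fun b : R => b `^ p) x).
  exact: norm_continuous.
apply: cvg_trans; first exact: near_eq_cvg expR_ln.
rewrite /powR gt_eqF ?normr_gt0 //.
apply: (@continuous_comp R R R (fun b => p * ln b) expR); last exact: continuous_expR.
by apply: continuousM; [exact: cst_continuous | apply: continuous_ln; rewrite normr_gt0].
Unshelve. all: by end_near.
Qed.

Lemma continuous_lqnorm_tr (q : R) D : 1 <= q ->
  continuous (fun u : 'rV[R]_D => lqnorm q u^T).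
Proof.
move=> q_ge1; have q_gt0 : 0 < q := lt_le_trans ltr01 q_ge1.
have -> : (fun u : 'rV[R]_D => lqnorm q u^T) =
    (fun u => `|\sum_j `|u 0 j| `^ q| `^ q^-1).
  apply: funext => u; rewrite /lqnorm ger0_norm; last first.
    by apply: sumr_ge0 => j _; exact: powR_ge0.
  by congr (_ `^ _); apply: eq_bigr => j _; rewrite mxE.
move=> u; apply: (@continuous_comp _ _ _ (fun u : 'rV[R]_D => \sum_j `|u 0 j| `^ q)
  (fun r : R => `|r| `^ q^-1)); last by apply: continuous_powR_norm; rewrite invr_gt0.
apply: (continuous_big add_continuous) => j _ {}u.
apply: (@continuous_comp _ _ _ (fun u : 'rV[R]_D => u 0 j) (fun r : R => `|r| `^ q)).
  exact: coord_continuous.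
exact: continuous_powR_norm.
Qed.

Lemma closed_submx k D (M : 'M[R]_(k, D)) : closed [set u : 'rV[R]_D | (u <= M)%MS].
Proof.
have -> : [set u : 'rV[R]_D | (u <= M)%MS] = \bigcap_(j in [set: 'I_D])
    ((fun u : 'rV[R]_D => \sum_a u 0 a * cokermx M a j) @^-1` [set 0]).
  apply/seteqP; split => u /=; rewrite submxE.
    by move=> /eqP/matrixP uM j _ /=; have := uM 0 j; rewrite !mxE.
  move=> uM; apply/eqP/matrixP => i j; rewrite (ord1 i) !mxE; exact: uM.
apply: closed_bigI => j _; apply: (proj1 (continuous_closedP _)); last exact: closed_eq.
apply: (continuous_big add_continuous) => a _ u.
by apply: continuousM; [exact: coord_continuous | exact: cst_continuous].
Qed.

Lemma closed_sublevel (T : topologicalType) (f : T -> R) (c : R) :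
  continuous f -> closed [set s | f s <= c].
Proof. by move=> f_cont; have := proj1 (continuous_closedP f) f_cont _ (@closed_le _ c). Qed.

Lemma continuous_min_closed (T : topologicalType) (A K : set T) (f : T -> R) (a : T) :
  closed A -> compact K -> continuous f -> A a ->
  (forall s, A s -> f s <= f a -> K s) ->
  exists2 s, A s & forall t, A t -> f s <= f t.
Proof.
move=> A_closed K_compact f_cont Aa sublevelK.
pose A' := K `&` (A `&` [set s | f s <= f a]).
have A'a : A' a by split; [exact: sublevelK Aa (lexx _) | split => /=].
have A'_compact : compact A'.
  apply: compact_closedI K_compact _; apply: closedI A_closed _.
  exact: closed_sublevel.
have [s /set_mem[_ [As _]] s_min] :=
  compact_EVT_min (ex_intro _ a A'a) A'_compact (continuous_subspaceT f_cont).
exists s => // t At; have [fta|] := leP (f t) (f a).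
  by apply: s_min; apply: mem_set; split; [exact: sublevelK At fta | split].
by move=> /ltW; apply: le_trans; apply: s_min; exact: mem_set.
Qed.

Lemma mx_norm_le_lqnorm (q : R) D (u : 'rV[R]_D) :
  1 <= q -> `|u| <= lqnorm q u^T.
Proof.
move=> q_ge1; rewrite /Num.norm /= mx_normrE; apply: bigmax_le; first exact: lqnorm_ge0.
by move=> [i j] _ /=; rewrite (ord1 i); have := ler_lqnorm_entry q_ge1 u^T j; rewrite mxE.
Qed.

Lemma compact_mx_normle D (M : R) : compact [set u : 'rV[R]_D | `|u| <= M].
Proof.
apply: bounded_closed_compact.
  exists M; split; first exact: num_real.
  by move=> r Mr u /= uM; apply: le_trans uM (ltW Mr).
exact: closed_sublevel (@norm_continuous _ 'rV[R]_D).
Qed.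

End real_analysis.

Section lq_l1_minimizer.
Import ArrowAsProduct.
Local Open Scope classical_set_scope.
Variables (R : realType) (q : R) (D n : nat) (m : 'I_n -> nat) (B : block_dict R D m).
Hypothesis q_ge1 : 1 <= q.
Variable S : {set 'I_n}.

(* Candidates are represented by the rows [(B i *m c i)^T], which range over a
   closed set even though [c] itself may be unbounded when [B i] is singular. *)
Let range_of i : 'M[R]_(m i, D) := if i \in S then (B i)^T else 0.
Let rows (c : block_coef R m) i : 'rV[R]_D := if i \in S then (B i *m c i)^T else 0.
Let coef (s : 'I_n -> 'rV[R]_D) : block_coef R m := fun i => (s i *m pinvmx (B i)^T)^T.
Let cost (s : 'I_n -> 'rV[R]_D) := \sum_i lqnorm q (s i)^T.
Let feasible (x : 'cV[R]_D) :=
  [set s : 'I_n -> 'rV[R]_D | forall i, (s i <= range_of i)%MS] `&`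
  [set s | \sum_i s i = x^T].

Let lqnorm_le_cost s i : lqnorm q (s i)^T <= cost s.
Proof.
by rewrite /cost (bigD1 i) //= lerDl; apply: sumr_ge0 => j _; exact: lqnorm_ge0.
Qed.

Let rows_feasible c : feasible (blocksum B S c) (rows c).
Proof.
split=> [i|].
  by rewrite /rows /range_of; case: ifP => _; rewrite ?trmx_mul ?submxMl ?sub0mx.
rewrite /= /blocksum (linear_sum (@trmx _ _ _)) [RHS]big_mkcond /=.
by apply: eq_bigr => i _; rewrite /rows; case: ifP.
Qed.

Let cost_rows c : cost (rows c) = \sum_(i in S) lqnorm q (B i *m c i).
Proof.
rewrite /cost [RHS]big_mkcond /=; apply: eq_bigr => i _.
by rewrite /rows; case: ifP; rewrite ?trmxK // linear0 lqnorm0.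
Qed.

Let coefK x s i : feasible x s -> i \in S -> B i *m coef s i = (s i)^T.
Proof.
move=> [s_range _] iS; have := s_range i; rewrite /range_of iS => s_le.
by rewrite /coef -{1}(trmxK (B i)) -trmx_mul mulmxKpV.
Qed.

Let feasible_row0 x s i : feasible x s -> i \notin S -> s i = 0.
Proof.
by move=> [s_range _] iS; have := s_range i; rewrite /range_of (negbTE iS); exact: submx0null.
Qed.

Let row_continuous i : continuous (fun s : 'I_n -> 'rV[R]_D => s i).
Proof. exact: (@proj_continuous _ (fun=> 'rV[R]_D) i). Qed.

Let feasible_closed x : closed (feasible x).
Proof.
apply: closedI.
  have -> : [set s : 'I_n -> 'rV[R]_D | forall i, (s i <= range_of i)%MS] =
      \bigcap_(i in [set: 'I_n]) ((fun s => s i) @^-1` [set u | (u <= range_of i)%MS]).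
    by apply/seteqP; split => s /= s_range i; [move=> _; exact: s_range | exact: s_range i I].
  apply: closed_bigI => i _; have := proj1 (continuous_closedP _) (@row_continuous i).
  by apply; exact: closed_submx.
have -> : [set s : 'I_n -> 'rV[R]_D | \sum_i s i = x^T] =
    \bigcap_(j in [set: 'I_D]) ((fun s => \sum_i s i 0 j) @^-1` [set x j 0]).
  apply/seteqP; split => s /=.
    by move=> sx j _ /=; have := congr1 (fun v : 'rV[R]_D => v 0 j) sx; rewrite summxE mxE.
  move=> sx; apply/matrixP => i j; rewrite (ord1 i) summxE mxE; exact: sx.
apply: closed_bigI => j _; have := proj1 (continuous_closedP _) _ _ (@closed_eq _ (x j 0)).
apply; apply: (continuous_big add_continuous) => i _ s.
apply: (@continuous_comp _ _ _ (fun s : 'I_n -> 'rV[R]_D => s i) (fun u : 'rV[R]_D => u 0 j)).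
  exact: row_continuous.
exact: coord_continuous.
Qed.

Let cost_continuous : continuous cost.
Proof.
apply: (continuous_big add_continuous) => i _ s.
apply: (@continuous_comp _ _ _ (fun s : 'I_n -> 'rV[R]_D => s i) (fun u => lqnorm q u^T)).
  exact: row_continuous.
exact: continuous_lqnorm_tr.
Qed.

Lemma lq_l1_min_exists x : in_blocksum B S x ->
  exists2 c, x = blocksum B S c & forall c', x = blocksum B S c' ->
    \sum_(i in S) lqnorm q (B i *m c i) <= \sum_(i in S) lqnorm q (B i *m c' i).
Proof.
move=> [c0 ->{x}]; set x := blocksum B S c0.
have box_compact : compact [set s : 'I_n -> 'rV[R]_D | forall i, `|s i| <= cost (rows c0)].
  apply: (@tychonoff _ (fun=> 'rV[R]_D) (fun=> [set u | `|u| <= cost (rows c0)])).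
  by move=> i; exact: compact_mx_normle.
have [s xs s_min] := continuous_min_closed (feasible_closed (x := x)) box_compact
  cost_continuous (rows_feasible c0) (fun s _ s_le i => le_trans
    (mx_norm_le_lqnorm (s i) q_ge1) (le_trans (lqnorm_le_cost s i) s_le)).
have cost_s : cost s = \sum_(i in S) lqnorm q (B i *m coef s i).
  rewrite /cost [RHS]big_mkcond; apply: eq_bigr => i _.
  by case: ifPn => iS; rewrite ?(coefK xs) ?trmxK // (feasible_row0 xs iS) trmx0 lqnorm0.
exists (coef s).
  rewrite -[LHS]trmxK -(proj2 xs) (linear_sum (@trmx _ _ _)) /blocksum [RHS]big_mkcond.
  apply: eq_bigr => i _; case: ifPn => iS; first by rewrite (coefK xs).
  by rewrite (feasible_row0 xs iS) linear0.
move=> c' xc'; have feasible_c' : feasible x (rows c') by rewrite xc'; exact: rows_feasible.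
by have := s_min _ feasible_c'; rewrite cost_s cost_rows.
Qed.

End lq_l1_minimizer.

Section block_problems.
Variables (R : realType) (q : R) (D n : nat) (m : 'I_n -> nat) (B : block_dict R D m).
Hypothesis q_ge1 : 1 <= q.

Definition restr_coef (L : {set 'I_n}) (c : block_coef R m) : block_coef R m :=
  fun i => if i \in L then c i else 0.

Lemma sum_setT (V : nmodType) (F : 'I_n -> V) :
  \sum_(i in [set: 'I_n]%SET) F i = \sum_i F i.
Proof. by apply: eq_bigl => i; rewrite finset.in_setT. Qed.

Lemma sum_setC_split (V : nmodType) (L : {set 'I_n}) (F : 'I_n -> V) :
  \sum_i F i = \sum_(i in L) F i + \sum_(i in ~: L) F i.
Proof. by rewrite (bigID (mem L)) /=; congr (_ + _); apply: eq_bigl => i; rewrite inE. Qed.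

Lemma blocksum_setT (L : {set 'I_n}) c :
  blocksum B [set: 'I_n]%SET c = blocksum B L c + blocksum B (~: L) c.
Proof. by rewrite /blocksum sum_setT (sum_setC_split L). Qed.

Lemma obj_lq_l1_split (L : {set 'I_n}) c : obj_lq_l1 q B c =
  \sum_(i in L) lqnorm q (B i *m c i) + \sum_(i in ~: L) lqnorm q (B i *m c i).
Proof. exact: sum_setC_split. Qed.

Lemma blocksumD (L : {set 'I_n}) c c' :
  blocksum B L (fun i => c i + c' i) = blocksum B L c + blocksum B L c'.
Proof. by rewrite /blocksum -big_split; apply: eq_bigr => i _; rewrite mulmxDr. Qed.

Lemma blocksumB (L : {set 'I_n}) c c' :
  blocksum B L (fun i => c i - c' i) = blocksum B L c - blocksum B L c'.
Proof. by rewrite /blocksum -sumrB; apply: eq_bigr => i _; rewrite mulmxBr. Qed.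

Lemma blocksum_restr (L : {set 'I_n}) c :
  blocksum B [set: 'I_n]%SET (restr_coef L c) = blocksum B L c.
Proof.
rewrite (blocksum_setT L) [X in _ + X]big1 ?addr0 => [|i]; last first.
  by rewrite inE /restr_coef => /negbTE ->; rewrite mulmx0.
by apply: eq_bigr => i iL; rewrite /restr_coef iL.
Qed.

Lemma obj_lq_l1_restr (L : {set 'I_n}) c :
  obj_lq_l1 q B (restr_coef L c) = \sum_(i in L) lqnorm q (B i *m c i).
Proof.
rewrite (obj_lq_l1_split L) [X in _ + X]big1 ?addr0 => [|i]; last first.
  by rewrite inE /restr_coef => /negbTE ->; rewrite mulmx0 lqnorm0.
by apply: eq_bigr => i iL; rewrite /restr_coef iL.
Qed.

Lemma W_lq_le (L : {set 'I_n}) x c :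
  x = blocksum B L c -> W_lq q B L x <= \sum_(i in L) lqnorm q (B i *m c i).
Proof.
move=> xc; apply: ge_inf; last by exists c.
by exists 0 => _ [c' [_ ->]]; apply: sumr_ge0 => i _; exact: lqnorm_ge0.
Qed.

Lemma W_lq_attained (L : {set 'I_n}) x : in_blocksum B L x ->
  exists2 c, x = blocksum B L c & W_lq q B L x = \sum_(i in L) lqnorm q (B i *m c i).
Proof.
move=> /(lq_l1_min_exists q_ge1)[c xc c_min]; exists c => //.
apply/le_anti; rewrite W_lq_le //= /W_lq; apply: lb_le_inf.
  by exists (\sum_(i in L) lqnorm q (B i *m c i)); exists c.
by move=> _ [c' [xc' ->]]; exact: c_min.
Qed.

Lemma obj_lq_l1_setT c :
  \sum_(i in [set: 'I_n]%SET) lqnorm q (B i *m c i) = obj_lq_l1 q B c.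
Proof. exact: sum_setT. Qed.

Lemma opt_lq_l1_exists x :
  in_blocksum B [set: 'I_n]%SET x -> exists c, opt_lq_l1 q B x c.
Proof.
move=> /(lq_l1_min_exists q_ge1)[c xc c_min]; exists c; split; first exact: xc.
by move=> c' xc'; rewrite -!obj_lq_l1_setT; exact: c_min.
Qed.

Lemma opt_lq_l1_le y c c' : opt_lq_l1 q B y c -> y = blocksum B [set: 'I_n]%SET c' ->
  obj_lq_l1 q B c' <= obj_lq_l1 q B c -> opt_lq_l1 q B y c'.
Proof.
move=> [_ c_min] yc' c'c; split; first exact: yc'.
by move=> c'' /c_min; exact: le_trans.
Qed.

(* Replacing the part of [c] outside [L] by [e] keeps a representation of [y]. *)
Lemma opt_lq_l1_tail_le (L : {set 'I_n}) y c e : opt_lq_l1 q B y c ->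
  blocksum B (~: L) c = blocksum B L e ->
  \sum_(i in ~: L) lqnorm q (B i *m c i) <= \sum_(i in L) lqnorm q (B i *m e i).
Proof.
move=> [yc c_min] tail_e.
have y_ce : y = blocksum B [set: 'I_n]%SET (restr_coef L (fun i => c i + e i)).
  by rewrite blocksum_restr blocksumD -tail_e -blocksum_setT.
have := c_min _ y_ce; rewrite obj_lq_l1_restr (obj_lq_l1_split L) => c_le.
rewrite -(lerD2l (\sum_(i in L) lqnorm q (B i *m c i))); apply: le_trans c_le _.
rewrite -big_split; apply: ler_sum => i _; rewrite mulmxDr; exact: lqnormD.
Qed.

Definition lq_l1_recovers_on (L : {set 'I_n}) := forall y, in_blocksum B L y ->
  forall c, opt_lq_l1 q B y c -> forall i, i \notin L -> B i *m c i = 0.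

Definition W_lq_gap_on (L : {set 'I_n}) := forall x, x != 0 ->
  in_blocksum B L x -> in_blocksum B (~: L) x -> W_lq q B L x < W_lq q B (~: L) x.

Lemma lq_l1_recovers_of_gap (L : {set 'I_n}) : W_lq_gap_on L -> lq_l1_recovers_on L.
Proof.
move=> gap y [cy ycy] c c_opt i iL.
set x := blocksum B (~: L) c.
have tail_le0 : \sum_(j in ~: L) lqnorm q (B j *m c j) <= 0.
  have [x0|x_neq0] := eqVneq x 0.
    have tail_e0 : blocksum B (~: L) c = blocksum B L (fun=> 0).
      by rewrite -/x x0 /blocksum big1 // => j _; rewrite mulmx0.
    have := opt_lq_l1_tail_le c_opt tail_e0.
    by rewrite [X in _ <= X -> _]big1 // => j _; rewrite mulmx0 lqnorm0.
  have xL : in_blocksum B L x.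
    exists (fun j => cy j - c j); rewrite blocksumB -ycy (proj1 c_opt).
    by rewrite (blocksum_setT L) addrC addKr.
  have [e xe We] := W_lq_attained xL.
  have xLc : in_blocksum B (~: L) x by exists c.
  have W_gap := gap x x_neq0 xL xLc.
  have := lt_le_trans W_gap (W_lq_le (L := ~: L) (erefl x)).
  by rewrite We ltNge (opt_lq_l1_tail_le c_opt xe).
have tail0 : \sum_(j in ~: L) lqnorm q (B j *m c j) = 0.
  by apply/le_anti; rewrite tail_le0 sumr_ge0 // => j _; exact: lqnorm_ge0.
have nonneg j : j \in ~: L -> 0 <= lqnorm q (B j *m c j) by move=> _; exact: lqnorm_ge0.
by apply: lqnorm_eq0; apply: (psumr_eq0P nonneg tail0); rewrite inE.
Qed.

Lemma blocksum_obj_supported (L : {set 'I_n}) c : (forall i, i \notin L -> B i *m c i = 0) ->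
  blocksum B [set: 'I_n]%SET c = blocksum B L c /\
  obj_lq_l1 q B c = \sum_(i in L) lqnorm q (B i *m c i).
Proof.
move=> c_supp; split.
  rewrite (blocksum_setT L) [X in _ + X]big1 ?addr0 // => i.
  by rewrite inE => /c_supp.
rewrite (obj_lq_l1_split L) [X in _ + X]big1 ?addr0 // => i.
by rewrite inE => /c_supp ->; exact: lqnorm0.
Qed.

Lemma W_lq_gap_of_recovers (L : {set 'I_n}) : lq_l1_recovers_on L -> W_lq_gap_on L.
Proof.
move=> rec x x_neq0 xL xLc; rewrite ltNge; apply/negP => W_le.
move/eqP: x_neq0; apply.
have [cs cs_opt] : exists c, opt_lq_l1 q B x c.
  case: xL => cL ->; apply: opt_lq_l1_exists.
  by exists (restr_coef L cL); rewrite blocksum_restr.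
have [xcs obj_cs] := blocksum_obj_supported (rec x xL cs cs_opt).
have [d xd Wd] := W_lq_attained xLc.
have d_opt : opt_lq_l1 q B x (restr_coef (~: L) d).
  apply: (opt_lq_l1_le cs_opt); first by rewrite blocksum_restr.
  rewrite obj_lq_l1_restr -Wd obj_cs; apply: le_trans W_le _.
  by apply: W_lq_le; rewrite -xcs (proj1 cs_opt).
rewrite xd /blocksum big1 // => i iLc.
have := rec x xL _ d_opt i; rewrite /restr_coef iLc; apply.
by rewrite inE in iLc.
Qed.

End block_problems.

Theorem theorem2 (R : realType) (q : R) (D n : nat) (m : 'I_n -> nat)
  (B : block_dict R D m) (k : nat) :
  1 <= q -> (0 < k)%N -> (k < n)%N ->
  unit_norm_columns B -> disjoint_blocks B -> unique_kbs B k ->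
  (forall (L : {set 'I_n}), #|L| = k ->
     forall (y : 'cV[R]_D), in_blocksum B L y ->
     forall c : block_coef R m, opt_lq_l1 q B y c ->
     forall i : 'I_n, i \notin L -> B i *m c i = 0)
  <->
  (forall (L : {set 'I_n}), #|L| = k ->
     forall (x : 'cV[R]_D), x != 0 ->
       in_blocksum B L x -> in_blocksum B (~: L) x ->
       W_lq q B L x < W_lq q B (~: L) x).
Proof.
move=> q_ge1 _ _ _ _ _; split=> [recovers L Lk | gap L Lk].
  by apply: W_lq_gap_of_recovers; [exact: q_ge1 | exact: recovers].
by apply: lq_l1_recovers_of_gap; [exact: q_ge1 | exact: gap].
Qed.
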